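(* Let $p$ be an odd prime and let $G$ be a pro-$p$-group with $G/[G,G]\cong(\mathbb{Z}/p\mathbb{Z})^d$ for some $d\ge 0$. Let $\rho:G\to\mathrm{GL}_n^{(1)}(\mathbb{Z}_p)$ be a continuous homomorphism. If $\rho(G)\ne1$ then $\rho(G)\not\subseteq\mathrm{GL}_n^{(2)}(\mathbb{Z}_p)$.
   Context: $\mathrm{GL}_n^{(k)}(\mathbb{Z}_p)=\{X\in\mathrm{GL}_n(\mathbb{Z}_p): X\equiv 1 \bmod p^k\}$; $[G,G]$ denotes the closed commutator subgroup. *)

From HB Require Import structures.
From mathcomp Require Import all_boot all_algebra.
From mathcomp Require Import boolp classical_sets topology.

Set Implicit Arguments.
Unset Strict Implicit.
Unset Printing Implicit Defensive.

Import GRing.Theory.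
Local Open Scope classical_set_scope.
Local Open Scope ring_scope.

#[short(type="groupTopType")]
HB.structure Definition GroupTop := {G of Group G & Topological G}.

Section ProP.
Variable G : groupTopType.
Local Open Scope group_scope.

Definition topological_group : Prop :=
  continuous (fun xy : G * G => xy.1 * xy.2) /\ continuous (fun x : G => x^-1).

Definition is_subgroup (H : set G) : Prop :=
  H 1 /\ (forall x y, H x -> H y -> H (x * y)) /\ (forall x, H x -> H x^-1).

Definition is_normal_subgroup (N : set G) : Prop :=
  is_subgroup N /\ (forall x g, N x -> N (g^-1 * x * g)).

(* N (a normal subgroup) has finite index m in G: there is a surjection
   G -> 'I_m whose fibres are exactly the cosets of N. *)
Definition has_index (N : set G) (m : nat) : Prop :=
  exists f : G -> 'I_m, (forall i, exists x, f x = i) /\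
    (forall x y, f x = f y <-> N (x * y^-1)).

Definition pro_p_group (p : nat) : Prop :=
  [/\ topological_group, compact [set: G], hausdorff_space G,
      totally_disconnected [set: G] &
      forall N : set G, open N -> is_normal_subgroup N ->
        exists k : nat, has_index N (p ^ k)].

Definition gen_subgroup (S : set G) : set G :=
  [set g | forall H, is_subgroup H -> S `<=` H -> H g].

Definition closed_commutator : set G :=
  closure (gen_subgroup [set [~ x, y] | x in [set: G] & y in [set: G]]).

(* G / [G,G] is isomorphic to (Z/pZ)^d: a surjective homomorphism onto the
   additive group 'rV['Z_p]_d whose kernel is exactly [G,G]. *)
Definition abelianization_elem_ab (p d : nat) : Prop :=
  exists phi : G -> 'rV['Z_p]_d,
    [/\ forall x y, phi (x * y) = (phi x + phi y)%R,
        forall v, exists x, phi x = v &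
        forall x, phi x = 0%R <-> closed_commutator x].

End ProP.

Definition red_mx (p n k : nat) (A : 'M['Z_(p ^ k.+2)]_n) : 'M['Z_(p ^ k.+1)]_n :=
  map_mx (fun a : 'Z_(p ^ k.+2) => ((a : nat)%:R : 'Z_(p ^ k.+1))) A.

(* GL_n(Z_p) is the inverse limit of GL_n(Z/p^(k+1)Z), k >= 0.  A continuous
   homomorphism rho : G -> GL_n(Z_p) is given by its compatible reductions
   rho k : G -> GL_n(Z/p^(k+1)), each a group homomorphism (hence with
   invertible values) which is continuous for the discrete topology on the
   finite target (preimages of points are open). *)
Definition cont_rep_Zp (G : groupTopType) (p n : nat)
    (rho : forall k : nat, G -> 'M['Z_(p ^ k.+1)]_n) : Prop :=
  [/\ forall k, rho k 1%g = 1%:M,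
      forall k x y, rho k (x * y)%g = rho k x *m rho k y,
      forall k x, red_mx (rho k.+1 x) = rho k x &
      forall k (A : 'M['Z_(p ^ k.+1)]_n), open (rho k @^-1` [set A])].

(* rho(x) lies in GL_n^{(j)}(Z_p) (j >= 1), i.e. rho(x) = 1 mod p^j. *)
Definition in_GLcong (G : groupTopType) (p n : nat)
    (rho : forall k : nat, G -> 'M['Z_(p ^ k.+1)]_n) (j : nat) (x : G) : Prop :=
  rho j.-1 x = 1%:M.

From HB Require Import structures.
From mathcomp Require Import all_boot all_algebra.
From mathcomp Require Import boolp classical_sets topology.

(* If rho = 1 mod p^(k+1) with k >= 1, then modulo p^(k+3) every rho x is of
   the form 1 + p^(k+1) A.  As p^(2k+2) = 0 mod p^(k+3), these matrices commute
   and (1 + p^(k+1) A)^p = 1 + p^(k+2) A.  Commutativity puts the closed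
   commutator subgroup into the kernel (closed, since rho has open fibres), and
   x^p lies in [G,G] because G/[G,G] has exponent p; hence p^(k+2) A = 0
   mod p^(k+3), i.e. rho = 1 mod p^(k+2).  Starting from rho = 1 mod p^2 this
   induction makes rho trivial. *)

Set Implicit Arguments.
Unset Strict Implicit.
Unset Printing Implicit Defensive.

Import GRing.Theory.
Local Open Scope classical_set_scope.
Local Open Scope ring_scope.

Section SquareZeroPerturbation.
Variables (R : comPzRingType) (n : nat).

Lemma mulmx_1Dscale (q r : R) (A B : 'M[R]_n) : q * r = 0 ->
  (1%:M + q *: A) *m (1%:M + r *: B) = 1%:M + (q *: A + r *: B).
Proof.
move=> qr0; rewrite mulmxDl !mul1mx mulmxDr mulmx1 -scalemxAl -scalemxAr.
by rewrite scalerA qr0 scale0r addr0 -addrA [r *: B + _]addrC.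
Qed.

Lemma expmx_1Dscale (q : R) (A : 'M[R]_n) m : q * q = 0 ->
  (1%:M + q *: A) ^+ m = 1%:M + (q *+ m) *: A.
Proof.
move=> qq0; elim: m => [|m IHm]; first by rewrite expr0 mulr0n scale0r addr0.
rewrite exprS IHm -mulmxE mulmx_1Dscale; last by rewrite mulrnAr qq0 mul0rn.
by rewrite -scalerDl mulrS.
Qed.

End SquareZeroPerturbation.

Section ClosedCommutator.
Variable G : groupTopType.

Lemma closed_commutator_sub (H : set G) :
  is_subgroup H -> closed H -> (forall x y, H [~ x, y]%g) ->
  @closed_commutator G `<=` H.
Proof.
move=> Hsub Hclosed Hcomm; rewrite /closed_commutator closureE.
apply: smallest_sub => // g gen_g; apply: gen_g Hsub _.
by move=> _ [x _ [y _ <-]].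
Qed.

Lemma closed_preimage1 (T : Type) (f : G -> T) (t : T) :
  (forall s, open (f @^-1` [set s])) -> closed (f @^-1` [set t]).
Proof.
move=> fibre_open; rewrite -[_ @^-1` _]setCK closedC preimage_setC.
suff -> : f @^-1` (~` [set t]) = \bigcup_(s in ~` [set t]) f @^-1` [set s].
  exact: bigcup_open.
by apply/seteqP; split=> [x ftx | x [s nts /= ->]] //; exists (f x).
Qed.

Lemma expg_closed_commutator (p d : nat) : prime p ->
  abelianization_elem_ab G p d -> forall x : G, @closed_commutator G (x ^+ p)%g.
Proof.
move=> p_pr [phi [phiM _ phiK]] x; apply/phiK.
have phi_exp m : phi (x ^+ m)%g = phi x *+ m.
  elim: m => [|m IHm]; last by rewrite expgS phiM IHm mulrS.
  rewrite expg0 mulr0n; apply: (@addrI _ (phi 1%g)).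
  by rewrite -phiM mulg1 addr0.
by rewrite phi_exp -scaler_nat pchar_Zp ?prime_gt1 // scale0r.
Qed.

Section RingRepresentation.
Variables (R : pzRingType) (f : G -> R).
Hypotheses (f1 : f 1%g = 1) (fM : forall x y, f (x * y)%g = f x * f y).

Lemma rep_expg x m : f (x ^+ m)%g = f x ^+ m.
Proof. by elim: m => [|m IHm]; rewrite ?expg0 ?expr0 // expgS fM IHm exprS. Qed.

Lemma rep_invgK x : f x^-1%g * f x = 1.
Proof. by rewrite -fM mulVg. Qed.

Lemma ker_rep_subgroup : is_subgroup [set x | f x = 1].
Proof.
split=> //=; split=> [x y fx1 fy1 | x fx1]; first by rewrite fM fx1 fy1 mulr1.
by rewrite -(rep_invgK x) fx1 mulr1.
Qed.

Lemma closed_commutator_sub_ker :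
  (forall x y, f x * f y = f y * f x) -> (forall t, open (f @^-1` [set t])) ->
  @closed_commutator G `<=` [set x | f x = 1].
Proof.
move=> fC fibre_open; apply: closed_commutator_sub.
- exact: ker_rep_subgroup.
- by rewrite -f1; exact: closed_preimage1.
move=> x y /=; rewrite /commg /conjg !fM (fC x y).
by rewrite (mulrA (f y^-1%g)) rep_invgK mul1r rep_invgK.
Qed.

End RingRepresentation.

End ClosedCommutator.

Definition mx_cong1 (m n q : nat) (M : 'M['Z_m]_n) : Prop :=
  forall i j, (M i j : nat) = (i == j) %[mod q].

Section Congruences.
Variable n : nat.

Lemma mx_cong1_eq1 m (M : 'M['Z_m]_n) : (1 < m)%N -> mx_cong1 m M <-> M = 1%:M.
Proof.
move=> m_gt1; split=> [M_cong | -> i j];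
  last by rewrite mxE val_Zp_nat ?modn_mod.
apply/matrixP=> i j; apply: val_inj; rewrite mxE /= val_Zp_nat // -M_cong.
by rewrite modn_small // -[m in (_ < m)%N](Zp_cast m_gt1) ltn_ord.
Qed.

Lemma mx_cong1_scale m q (M : 'M['Z_m]_n) : (1 < q)%N -> mx_cong1 q M ->
  M = 1%:M + q%:R *: map_mx (fun a : 'Z_m => ((a : nat) %/ q)%:R) M.
Proof.
move=> q_gt1 M_cong; apply/matrixP=> i j; rewrite !mxE -natrM -natrD.
rewrite -[LHS]natr_Zp {1}(divn_eq (M i j) q) M_cong mulnC.
by rewrite (@modn_small (i == j)) ?(leq_ltn_trans (leq_b1 _) q_gt1) // addnC.
Qed.

Variable p : nat.
Hypothesis p_gt1 : (1 < p)%N.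

Lemma expn_gt1 k : (1 < p ^ k.+1)%N.
Proof. by rewrite -{1}(expn0 p) ltn_exp2l. Qed.

Lemma red_mxE k (M : 'M['Z_(p ^ k.+2)]_n) i j :
  (red_mx M i j : nat) = (M i j %% p ^ k.+1)%N.
Proof. by rewrite mxE val_Zp_nat ?expn_gt1. Qed.

Lemma mx_cong1_red k q (M : 'M['Z_(p ^ k.+2)]_n) : (q %| p ^ k.+1)%N ->
  mx_cong1 q (red_mx M) <-> mx_cong1 q M.
Proof.
by move=> q_dvd; split=> M_cong i j; move: (M_cong i j);
  rewrite red_mxE modn_dvdm.
Qed.

Lemma mx_cong1_1Dscale e (A : 'M['Z_(p ^ e.+2)]_n) :
  (p ^ e.+1)%:R *: A = 0 -> mx_cong1 (p ^ e.+1) (1%:M + (p ^ e)%:R *: A).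
Proof.
move=> pA0 i j.
have /dvdnP[c Aij] : (p %| A i j)%N.
  have /(congr1 val) := congr1 (fun M : 'M_n => M i j) pA0.
  rewrite !mxE -[A i j in X in X = _]natr_Zp -natrM /= val_Zp_nat ?expn_gt1 //.
  move: (A i j : nat) => a /eqP; rewrite -/(dvdn _ _) (expnSr p e.+1).
  by rewrite dvdn_pmul2l ?expn_gt0 ?(ltnW p_gt1).
rewrite !mxE -[A i j]natr_Zp Aij -!natrM -natrD val_Zp_nat ?expn_gt1 //.
by rewrite modn_dvdm ?dvdn_exp2l // mulnCA -expnSr addnC modnMDl.
Qed.

End Congruences.

Lemma cont_rep_trivial_succ (G : groupTopType) (p d n : nat)
    (rho : forall k : nat, G -> 'M['Z_(p ^ k.+1)]_n) (k : nat) :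
  prime p -> abelianization_elem_ab G p d -> cont_rep_Zp rho -> (0 < k)%N ->
  (forall x, rho k x = 1%:M) -> forall x, rho k.+1 x = 1%:M.
Proof.
move=> p_pr Hab [rho1 rhoM rho_red rho_open] k_gt0 rho_k1.
have p_gt1 := prime_gt1 p_pr.
pose q : 'Z_(p ^ k.+3) := (p ^ k.+1)%:R.
(* [q ^ 2 = p ^ (2k + 2)] vanishes modulo [p ^ (k + 3)] because [k >= 1]. *)
have qq0 : q * q = 0.
  apply: val_inj; rewrite -natrM -expnD /= val_Zp_nat ?expn_gt1 //.
  by apply/eqP/dvdn_exp2l; rewrite addSn addnS !ltnS -addn1 leq_add2l.
have rho_1Dscale x : exists A, rho k.+2 x = 1%:M + q *: A.
  eexists; apply: mx_cong1_scale; first exact: expn_gt1.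
  apply/(mx_cong1_red p_gt1 _ (dvdn_exp2l p (leqnSn k.+1))); rewrite rho_red.
  apply/(mx_cong1_red p_gt1 _ (dvdnn _)); rewrite rho_red.
  exact/(mx_cong1_eq1 _ (expn_gt1 p_gt1 k)).
have rho_comm x y : rho k.+2 x * rho k.+2 y = rho k.+2 y * rho k.+2 x.
  have [[A ->] [B ->]] := (rho_1Dscale x, rho_1Dscale y).
  by rewrite -mulmxE !(mulmx_1Dscale _ _ qq0) [q *: A + _]addrC.
have rho_ker :=
  closed_commutator_sub_ker (rho1 k.+2) (rhoM k.+2) rho_comm (rho_open k.+2).
move=> x; have [A rhoxE] := rho_1Dscale x.
have : rho k.+2 x ^+ p = 1.
  rewrite -(rep_expg (rho1 k.+2) (rhoM k.+2)).
  exact: rho_ker _ (expg_closed_commutator p_pr Hab (x:=x)).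
rewrite rhoxE expmx_1Dscale // => /(canRL (addKr _)); rewrite addNr => pA0.
apply/(mx_cong1_eq1 _ (expn_gt1 p_gt1 k.+1)); rewrite -rho_red.
apply/(mx_cong1_red p_gt1 _ (dvdnn _)); rewrite rhoxE.
apply: mx_cong1_1Dscale => //.
by rewrite (expnSr p k.+1) natrM mulr_natr -/q.
Qed.

Theorem lemma3p2 (p : nat) (Hp : prime p) (Hodd : odd p)
  (G : groupTopType) (d : nat)
  (HG : pro_p_group G p)
  (Hab : abelianization_elem_ab G p d)
  (n : nat) (rho : forall k : nat, G -> 'M['Z_(p ^ k.+1)]_n)
  (Hrho : cont_rep_Zp rho)
  (H1 : forall x : G, in_GLcong rho 1 x)
  (Hnontriv : exists (k : nat) (x : G), (rho k x <> 1%:M)%R) :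
  ~ (forall x : G, in_GLcong rho 2 x).
Proof.
move=> H2; have rho_trivial k x : rho k x = 1%:M.
  elim: k x => [|[|k] IHk]; [exact: H1 | exact: H2 |].
  exact: cont_rep_trivial_succ Hp Hab Hrho _ IHk.
by case: Hnontriv => k [x]; apply; apply: rho_trivial.
Qed.
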